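(* Let $P,N>0$. If $\mathcal{C}$ is a $(P,N,1)$-sphere packing, then it is also a $(P,N',L)$-average-radius multiple packing for any $0\le N'<\frac{2(L-1)N}{L}$ and any $L\in\mathbb{Z}_{\ge2}$.
   Context: $\mathcal{B}^n(y,r)$ is the closed Euclidean ball in $\mathbb{R}^n$ of radius $r$ centered at $y$, $\mathcal{B}^n(r)=\mathcal{B}^n(0,r)$. A set $\mathcal{C}\subseteq\mathcal{B}^n(\sqrt{nP})$ is a $(P,N,1)$-sphere packing if $|\mathcal{C}\cap\mathcal{B}^n(y,\sqrt{nN})|\le1$ for every $y\in\mathbb{R}^n$. For $x_1,\dots,x_m\in\mathbb{R}^n$ with centroid $\bar x$, $\overline{\mathrm{rad}}^2(x_1,\dots,x_m)=\frac1m\sum_i\|x_i-\bar x\|_2^2$. A set $\mathcal{C}\subseteq\mathcal{B}^n(\sqrt{nP})$ is a $(P,N',K)$-average-radius multiple packing if every $K+1$ distinct points of $\mathcal{C}$ have average squared radius strictly greater than $nN'$. *)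

From mathcomp Require Import all_boot all_order all_algebra.
From mathcomp Require Import classical_sets reals.
Set Implicit Arguments. Unset Strict Implicit. Unset Printing Implicit Defensive.
Import Order.TTheory GRing.Theory Num.Theory.
Local Open Scope ring_scope.
Local Open Scope classical_set_scope.

Definition sqnorm (R : realType) (n : nat) (x : 'rV[R]_n) : R :=
  \sum_(i < n) x ord0 i ^+ 2.

Definition ball_cl (R : realType) (n : nat) (y : 'rV[R]_n) (r : R) : set 'rV[R]_n :=
  [set x | Num.sqrt (sqnorm (x - y)) <= r].

Definition centroid (R : realType) (n m : nat) (x : 'I_m -> 'rV[R]_n) : 'rV[R]_n :=
  (m%:R)^-1 *: \sum_(i < m) x i.

Definition avg_sq_rad (R : realType) (n m : nat) (x : 'I_m -> 'rV[R]_n) : R :=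
  (m%:R)^-1 * \sum_(i < m) sqnorm (x i - centroid x).

Definition sphere_packing (R : realType) (n : nat) (P N : R) (C : set 'rV[R]_n) : Prop :=
  C `<=` ball_cl 0 (Num.sqrt (n%:R * P)) /\
  forall y : 'rV[R]_n, forall a b, C a -> C b ->
    ball_cl y (Num.sqrt (n%:R * N)) a -> ball_cl y (Num.sqrt (n%:R * N)) b -> a = b.

Definition avg_radius_multiple_packing (R : realType) (n : nat) (P N' : R) (K : nat)
  (C : set 'rV[R]_n) : Prop :=
  C `<=` ball_cl 0 (Num.sqrt (n%:R * P)) /\
  forall x : 'I_K.+1 -> 'rV[R]_n, injective x -> (forall i, C (x i)) ->
    n%:R * N' < avg_sq_rad x.

(* Two distinct points of a (P,N,1)-packing cannot both lie in the ball of
   radius sqrt(nN) around their midpoint, so their squared distance exceeds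
   4nN.  The average squared radius of m points equals the sum of all their
   squared pairwise distances divided by 2m^2, hence for m = L+1 distinct
   codewords it exceeds (m-1)m 4nN / (2m^2) = 2LnN/(L+1), which dominates
   nN' because N' < 2(L-1)N/L < 2LN/(L+1). *)
From mathcomp Require Import all_boot all_order all_algebra.
From mathcomp Require Import classical_sets reals.
From mathcomp Require Import ring lra.

Set Implicit Arguments.
Unset Strict Implicit.
Unset Printing Implicit Defensive.
Import Order.TTheory GRing.Theory Num.Theory.
Local Open Scope ring_scope.

Lemma sum_sqr_dev_mean (F : fieldType) (m : nat) (a : 'I_m -> F) :
  m%:R != 0 :> F ->
  2 * m%:R * \sum_i (a i - m%:R^-1 * \sum_j a j) ^+ 2 =
  \sum_i \sum_j (a i - a j) ^+ 2.
Proof.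
move=> m_neq0; set S := \sum_j a j; set Q := \sum_j a j ^+ 2.
have sum_sqr_sub c : \sum_j (a j - c) ^+ 2 = Q - 2 * c * S + m%:R * c ^+ 2.
  rewrite (eq_bigr (fun j => a j ^+ 2 - 2 * c * a j + c ^+ 2)); last by move=> j _; ring.
  by rewrite big_split sumrB -mulr_sumr sumr_const card_ord -[_ *+ m]mulr_natl.
rewrite sum_sqr_sub.
under eq_bigr => i _ do under eq_bigr => j _ do rewrite -sqrrN opprB.
rewrite (eq_bigr _ (fun i _ => sum_sqr_sub (a i))) big_split sumrB /=.
rewrite sumr_const card_ord -mulr_suml -!mulr_sumr -/S -/Q -[Q *+ m]mulr_natl.
by field.
Qed.

Section SquaredNorm.
Variables (R : realType) (n : nat).
Implicit Types (u v : 'rV[R]_n) (c : R).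

Lemma sqnormB u v : sqnorm (u - v) = \sum_k (u ord0 k - v ord0 k) ^+ 2.
Proof. by apply: eq_bigr => k _; rewrite !mxE. Qed.

Lemma sqnormZ c u : sqnorm (c *: u) = c ^+ 2 * sqnorm u.
Proof. by rewrite /sqnorm mulr_sumr; apply: eq_bigr => k _; rewrite mxE exprMn. Qed.

Lemma sqnorm0 : sqnorm (0 : 'rV[R]_n) = 0.
Proof. by apply: big1 => k _; rewrite mxE expr0n. Qed.

Lemma sqnorm_ge0 u : 0 <= sqnorm u.
Proof. by apply: sumr_ge0 => k _; rewrite sqr_ge0. Qed.

End SquaredNorm.

Section AverageRadius.
Variables (R : realType) (n : nat).

Lemma avg_sq_rad_pairwise (m : nat) (x : 'I_m -> 'rV[R]_n) : (0 < m)%N ->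
  2 * m%:R ^+ 2 * avg_sq_rad x = \sum_i \sum_j sqnorm (x i - x j).
Proof.
move=> m_gt0; have m_neq0 : m%:R != 0 :> R by rewrite pnatr_eq0 -lt0n.
have -> : 2 * m%:R ^+ 2 * avg_sq_rad x
    = 2 * m%:R * \sum_i sqnorm (x i - centroid x) by rewrite /avg_sq_rad; field.
rewrite (eq_bigr (fun i => \sum_k (x i ord0 k - m%:R^-1 * \sum_j x j ord0 k) ^+ 2));
  last by move=> i _; rewrite sqnormB; apply: eq_bigr => k _; rewrite !mxE summxE.
rewrite exchange_big mulr_sumr.
under eq_bigr => k _ do rewrite sum_sqr_dev_mean //.
rewrite exchange_big; apply: eq_bigr => i _.
by rewrite exchange_big; apply: eq_bigr => j _; rewrite sqnormB.
Qed.

Lemma sphere_packing_sqnormB_gt (P N : R) (C : set 'rV[R]_n) (a b : 'rV[R]_n) :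
  sphere_packing P N C -> C a -> C b -> a <> b ->
  4 * (n%:R * N) < sqnorm (a - b).
Proof.
move=> [_ C_packing] Ca Cb a_neq_b; rewrite ltNge; apply/negP => ab_close.
have nN_ge0 : 0 <= n%:R * N.
  by rewrite -(pmulr_rge0 _ (ltr0Sn R 3)); apply: le_trans ab_close; exact: sqnorm_ge0.
pose y := 2^-1 *: (a + b).
have in_ball c (s : R) : s ^+ 2 = 4^-1 -> c - y = s *: (a - b) ->
    ball_cl y (Num.sqrt (n%:R * N)) c.
  by move=> s2 cy; rewrite /ball_cl /= cy ler_sqrt // sqnormZ s2; lra.
apply: a_neq_b; apply: (C_packing y) => //.
- by apply: (in_ball _ 2^-1); [field | apply/matrixP => i j; rewrite !mxE; field].
- by apply: (in_ball _ (- 2^-1)); [field | apply/matrixP => i j; rewrite !mxE; field].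
Qed.

Lemma avg_sq_rad_gt_separated (m : nat) (x : 'I_m -> 'rV[R]_n) (d : R) : (1 < m)%N ->
  (forall i j, i != j -> d < sqnorm (x i - x j)) ->
  m.-1%:R * d < 2 * m%:R * avg_sq_rad x.
Proof.
move=> m_gt1 sep; have m_gt0 : (0 < m)%N by apply: ltnW.
have m_pos : 0 < m%:R :> R by rewrite ltr0n.
have has_ne i : has (fun j => j != i) (index_enum 'I_m).
  have /card_gt0P [j ji] : (0 < #|predC1 i|)%N by rewrite cardC1 card_ord -subn1 subn_gt0.
  by apply/hasP; exists j; rewrite ?mem_index_enum.
rewrite -(ltr_pM2l m_pos).
have -> : m%:R * (2 * m%:R * avg_sq_rad x) = 2 * m%:R ^+ 2 * avg_sq_rad x by ring.
rewrite avg_sq_rad_pairwise //.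
under [X in _ < X]eq_bigr => i _ do rewrite (bigD1 i) //= subrr sqnorm0 add0r.
have -> : m%:R * (m.-1%:R * d) = \sum_(i < m) \sum_(j | j != i) d.
  under eq_bigr => i _ do rewrite (sumr_const (predC1 i)) cardC1 card_ord.
  by rewrite sumr_const card_ord !mulr_natl.
apply: ltr_sum; first by apply/hasP; exists (Ordinal m_gt0); rewrite ?mem_index_enum.
by move=> i _; apply: ltr_sum => // j; rewrite eq_sym; apply: sep.
Qed.

End AverageRadius.

Theorem mainTheorem10 (R : realType) (n : nat) (P N N' : R) (L : nat)
  (C : classical_sets.set 'rV[R]_n) :
  0 < P -> 0 < N -> (2 <= L)%N ->
  sphere_packing P N C ->
  0 <= N' -> N' < 2 * (L%:R - 1) * N / L%:R ->
  avg_radius_multiple_packing P N' L C.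
Proof.
move=> _ N_gt0 L_ge2 C_packing _ N'_lt.
split=> [|x x_inj xC]; first by case: C_packing.
have sep i j : i != j -> 4 * (n%:R * N) < sqnorm (x i - x j).
  by move=> /eqP i_neq_j; apply: (sphere_packing_sqnormB_gt C_packing) => // /x_inj.
have := avg_sq_rad_gt_separated (leqW L_ge2) sep; rewrite -[L.+1%:R]natr1 /=.
have two_le_L : 2 <= L%:R :> R by rewrite (ler_nat R 2).
have N'_le : N' * (L%:R + 1) <= 2 * L%:R * N.
  move: N'_lt; rewrite ltr_pdivlMr; [nra | lra].
(* 2 (L+1) nN' <= 4 L nN < 2 (L+1) avg_sq_rad x *)
have : 0 <= n%:R * (2 * L%:R * N - N' * (L%:R + 1)) by rewrite mulr_ge0 ?subr_ge0.
nra.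
Qed.
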